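(* Let $p,p'\ge1$ with $|p-p'|=1$ and let $X=\alpha_{(p,p')}(Y)$ where $Y$ is a Sturmian word in which $bb$ does not occur. Then: (i) $|M_{(X,b)}\cap O_X|=1$; (ii) $|M_{(X,a)}\cap O_X|=(k+1)/2$, where $k$ is the (unique) odd element of $\{p-1,p'-1\}$; (iii) $|M_{(X,aa)}\cap O_X|=k/2$, where $k$ is the (unique) even element of $\{p-1,p'-1\}$; (iv) $|M_X\cap O_X|=\max(p,p')$.
   Context: $\alpha_{(p,p')}$ is the morphism $a\mapsto a^pb$, $b\mapsto a^{p'}b$. A Sturmian word is a right-infinite aperiodic word over $\{a,b\}$ with exactly $n+1$ factors of each length $n$. A palindrome $P$ is maximal in $X$ if $lPl'$ is a factor of $X$ for letters $l\neq l'$ (a maximal occurrence). $M_X$ is the set of distinct maximal palindromes of $X$; $M_{(X,a)}$, $M_{(X,b)}$, $M_{(X,aa)}$ are those whose center (middle letter for odd length, middle two letters for even length) is $a$, $b$, $aa$ respectively. A center occurrence is an occurrence of $a$, $b$ or $aa$. Write $Y=y_1y_2\cdots$, $X=\alpha(y_1)\alpha(y_2)\cdots$, $\alpha(y_j)$ at positions $s_j+1,\dots,s_j+|\alpha(y_j)|$, $s_j=\sum_{t<j}|\alpha(y_t)|$. The reflection of an occurrence $y_j=a$ (resp. $b$) is the center of the run $a^p$ (resp. $a^{p'}$) at positions $s_j+1,\dots,s_j+p$ (resp. $s_j+p'$); the reflection of an occurrence $y_jy_{j+1}=aa$ is the $b$ at position $s_j+p+1$. A center occurrence of $X$ is original if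 it is not the reflection of any center occurrence of $Y$. $O_X$ is the set of original palindromes: maximal palindromes of $X$ having a maximal occurrence whose center occurrence is original. *)

(* Words over {a,b} are encoded with bool:
   a := false, b := true.  Infinite words are functions nat -> bool,
   positions are 0-indexed (the paper's position q+1 is our q). *)
From mathcomp Require Import all_boot.
Set Implicit Arguments. Unset Strict Implicit. Unset Printing Implicit Defensive.

Definition a : bool := false.
Definition b : bool := true.

Definition occurs_at (X : nat -> bool) (w : seq bool) (i : nat) : Prop :=
  forall j, j < size w -> X (i + j) = nth a w j.

Definition factor (X : nat -> bool) (w : seq bool) : Prop :=
  exists i, occurs_at X w i.

Definition has_card (S : seq bool -> Prop) (n : nat) : Prop :=
  exists s : seq (seq bool), [/\ uniq s, size s = n & forall w, S w <-> w \in s].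

Definition eventually_periodic (X : nat -> bool) : Prop :=
  exists per N, 0 < per /\ forall i, N <= i -> X (i + per) = X i.

Definition sturmian (X : nat -> bool) : Prop :=
  ~ eventually_periodic X /\
  forall n, has_card (fun w => size w = n /\ factor X w) n.+1.

Definition alpha (p p' : nat) (l : bool) : seq bool :=
  if l then rcons (nseq p' a) b else rcons (nseq p a) b.

Definition spos (p p' : nat) (Y : nat -> bool) (j : nat) : nat :=
  \sum_(t < j) size (alpha p p' (Y t)).

(* X = alpha(y_1) alpha(y_2) ... : alpha(y_j) occupies positions s_j, ..., s_j+|alpha(y_j)|-1 *)
Definition is_alpha_image (p p' : nat) (Y X : nat -> bool) : Prop :=
  forall j k, k < size (alpha p p' (Y j)) ->
    X (spos p p' Y j + k) = nth a (alpha p p' (Y j)) k.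

Definition palindrome (w : seq bool) : Prop := rev w = w.

Definition maximal_occ (X : nat -> bool) (P : seq bool) (i : nat) : Prop :=
  0 < i /\ occurs_at X P i /\ X i.-1 <> X (i + size P).

Definition MX (X : nat -> bool) (P : seq bool) : Prop :=
  palindrome P /\ exists i, maximal_occ X P i.

Definition word_center (P : seq bool) : seq bool :=
  let n := size P in
  if odd n then [:: nth a P n./2]
  else if n == 0 then [::] else [:: nth a P n./2.-1; nth a P n./2].

Definition MXc (X : nat -> bool) (c : seq bool) (P : seq bool) : Prop :=
  MX X P /\ word_center P = c.

(* A center occurrence is encoded as (start position, length), length 1 (an
   occurrence of a or b) or 2 (an occurrence of aa). *)
Definition center_occ (X : nat -> bool) (c : nat * nat) : Prop :=
  c.2 = 1 \/ (c.2 = 2 /\ X c.1 = a /\ X c.1.+1 = a).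

(* center occurrence of the factor of length n >= 1 starting at i *)
Definition mid (i n : nat) : nat * nat :=
  if odd n then (i + n./2, 1) else (i + n./2 - 1, 2).

Definition occ_center (i n : nat) : option (nat * nat) :=
  if n == 0 then None else Some (mid i n).

Definition is_reflection (p p' : nat) (Y : nat -> bool) (c : nat * nat) : Prop :=
  exists j,
    (Y j = a /\ c = mid (spos p p' Y j) p) \/
    (Y j = b /\ c = mid (spos p p' Y j) p') \/
    (Y j = a /\ Y j.+1 = a /\ c = (spos p p' Y j + p, 1)).

Definition original (p p' : nat) (Y X : nat -> bool) (c : nat * nat) : Prop :=
  center_occ X c /\ ~ is_reflection p p' Y c.

Definition OX (p p' : nat) (Y X : nat -> bool) (P : seq bool) : Prop :=
  MX X P /\ exists i c, maximal_occ X P i /\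
    occ_center i (size P) = Some c /\ original p p' Y X c.

From mathcomp Require Import all_boot zify.
From Stdlib Require Import Classical.
Set Implicit Arguments. Unset Strict Implicit. Unset Printing Implicit Defensive.

(* A maximal palindrome is determined by its center and by its radius, the
   first distance at which the two sides of X disagree.  If an original center
   lies in the run a^q coming from one letter of Y, the palindrome cannot leave
   that run; it is a^r with r < q <= max(p,p'), since r = q would make the
   center the reflection of that letter.  If the center is a b, the letters of
   Y on both sides of it differ (bb does not occur, and aa would make the b a
   reflection), so the b separates a run a^p from a run a^p' and the palindrome
   is a^m b a^m with m = min(p,p').  Conversely, aperiodicity of Y provides
   long runs a^max(p,p') and occurrences of ba in Y, and |p - p'| = 1 makes
   a^m b a^m maximal; the counts then follow from the parity of r. *)

Lemma midE x h e : e <= 1 -> mid x (2 * h + e + 1) = (x + h, e.+1).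
Proof.
rewrite /mid mul2n -addnA oddD odd_double -!divn2.
by case: e => [|[|]] // _ /=; congr (_, _); lia.
Qed.

Lemma mid_cases n : 0 < n -> exists h e, e <= 1 /\ n = 2 * h + e + 1.
Proof.
move=> n_gt0; exists (n.-1./2), (odd n.-1).
by split; [case: odd | rewrite -[n in LHS]prednK // -{1}(odd_double_half n.-1); lia].
Qed.

Lemma occurs_at_inj X P Q i :
  occurs_at X P i -> occurs_at X Q i -> size P = size Q -> P = Q.
Proof.
move=> occP occQ eq_sz; apply: (@eq_from_nth _ a) => // u ltu.
by rewrite -occP // occQ // -eq_sz.
Qed.

Lemma occurs_at_nseq X r x :
  (forall u, u < r -> X (x + u) = a) -> occurs_at X (nseq r a) x.
Proof. by move=> Xa u; rewrite size_nseq => ltu; rewrite nth_nseq ltu Xa. Qed.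

Definition aba n : seq bool := nseq n a ++ b :: nseq n a.

Lemma size_aba n : size (aba n) = 2 * n + 1.
Proof. by rewrite size_cat /= !size_nseq; lia. Qed.

Lemma nth_aba n u : nth a (aba n) u = (u == n).
Proof.
rewrite nth_cat size_nseq; case: ltngtP => [lt_un|lt_nu|->].
- by rewrite nth_nseq lt_un.
- have -> : u - n = (u - n.+1).+1 by lia.
  by rewrite /= nth_nseq if_same.
- by rewrite subnn.
Qed.

Lemma aba_palindrome n : palindrome (aba n).
Proof. by rewrite /palindrome /aba rev_cat rev_cons rev_nseq -cats1 -catA. Qed.

Lemma word_center_aba n : word_center (aba n) = [:: b].
Proof.
rewrite /word_center size_aba.
have -> : (2 * n + 1)./2 = n by rewrite -divn2; lia.
by rewrite mul2n addn1 /= odd_double nth_aba eqxx.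
Qed.

Lemma word_center_nseq r :
  word_center (nseq r a) = if odd r then [:: a] else if r == 0 then [::] else [:: a; a].
Proof. by rewrite /word_center size_nseq !nth_nseq !if_same. Qed.

Lemma has_card_ext (S S' : seq bool -> Prop) n :
  has_card S n -> (forall w, S w <-> S' w) -> has_card S' n.
Proof. by move=> [s [uniq_s size_s memS]] eqS; exists s; split=> // w; rewrite -eqS. Qed.

Lemma has_card1 (S : seq bool -> Prop) w : (forall v, S v <-> v = w) -> has_card S 1.
Proof. by move=> Sw; exists [:: w]; split=> // v; rewrite Sw mem_seq1; split=> /eqP. Qed.

Lemma has_card_addr (S : seq bool -> Prop) w n :
  has_card S n -> ~ S w -> has_card (fun v => S v \/ v = w) n.+1.
Proof.
move=> [s [uniq_s size_s memS]] Sw; exists (rcons s w); split.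
- by rewrite rcons_uniq uniq_s andbT; apply/negP => /memS.
- by rewrite size_rcons size_s.
- move=> v; rewrite mem_rcons inE.
  by split=> [[/memS -> | ->]|/orP[/eqP|/memS]]; rewrite ?orbT ?eqxx; auto.
Qed.

Lemma has_card_iota (S : seq bool -> Prop) (f : nat -> seq bool) K :
  injective f -> (forall w, S w <-> exists2 t, t < K & w = f t) -> has_card S K.
Proof.
move=> inj_f Sf; exists [seq f t | t <- iota 0 K]; split.
- by rewrite map_inj_uniq ?iota_uniq.
- by rewrite size_map size_iota.
- move=> w; rewrite Sf; split=> [[t lt_t ->]|/mapP[t]].
    by apply: map_f; rewrite mem_iota.
  by rewrite mem_iota => /andP[_ lt_t] ->; exists t.
Qed.

Definition a_run_palindrome (M : nat) (P : seq bool) : Prop :=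
  exists2 r, 0 < r < M & P = nseq r a.

Lemma inj_nseq_a (g : nat -> nat) : injective g -> injective (fun t => nseq (g t) a).
Proof. by move=> inj_g t t' /(congr1 size); rewrite !size_nseq => /inj_g. Qed.

Lemma has_card_a_run_palindrome M : has_card (a_run_palindrome M) M.-1.
Proof.
apply: (has_card_iota (inj_nseq_a succn_inj)) => w.
by split=> [[r lt_r ->]|[t lt_t ->]]; [exists r.-1; [|congr nseq] | exists t.+1] => //; lia.
Qed.

Lemma has_card_odd_a_run_palindrome M :
  has_card (fun P => a_run_palindrome M P /\ word_center P = [:: a]) M./2.
Proof.
have inj : injective (fun t => 2 * t + 1) by move=> t t'; lia.
apply: (has_card_iota (inj_nseq_a inj)) => w; rewrite -divn2; split.
- move=> [[r lt_r ->]]; rewrite word_center_nseq.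
  case: ifP => [odd_r _ | _]; last by case: (r == 0).
  have := odd_double_half r; rewrite odd_r -mul2n /= => def_r.
  by exists r./2; [|congr nseq]; lia.
- move=> [t lt_t ->]; split; first by exists (2 * t + 1); [lia|].
  by rewrite word_center_nseq addn1 /= mul2n odd_double.
Qed.

Lemma has_card_even_a_run_palindrome M :
  has_card (fun P => a_run_palindrome M P /\ word_center P = [:: a; a]) (M.-1)./2.
Proof.
have inj : injective (fun t => 2 * t + 2) by move=> t t'; lia.
apply: (has_card_iota (inj_nseq_a inj)) => w; rewrite -divn2; split.
- move=> [[r lt_r ->]]; rewrite word_center_nseq.
  case: ifP => // /negbT even_r; case: eqP => // r_neq0 _.
  have := odd_double_half r; rewrite (negbTE even_r) -mul2n /= => def_r.
  by exists r./2.-1; [|congr nseq]; lia.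
- move=> [t lt_t ->]; split; first by exists (2 * t + 2); [lia|].
  by rewrite word_center_nseq !addnS addn0 /= mul2n odd_double.
Qed.

(* The palindrome centred at c (e = 0) or at c, c+1 (e = 1) extends exactly
   h letters on each side. *)
Definition pal_radius (X : nat -> bool) (c e h : nat) : Prop :=
  (forall d, d <= h -> X (c - d) = X (c + e + d)) /\ X (c - h.+1) <> X (c + e + h.+1).

Lemma maximal_occ_pal_radius X P i h e : palindrome P -> maximal_occ X P i ->
  size P = 2 * h + e + 1 -> pal_radius X (i + h) e h.
Proof.
move=> palP [i_gt0 [occP neq_ends]] szP; split=> [d le_d|].
- have -> : i + h - d = i + (h - d) by lia.
  have -> : i + h + e + d = i + (h + e + d) by lia.
  rewrite !occP; try lia.
  by rewrite -[in LHS]palP nth_rev; [congr nth|]; lia.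
- have -> : i + h - h.+1 = i.-1 by lia.
  by have -> : i + h + e + h.+1 = i + size P by lia.
Qed.

Lemma pal_radius_unique X c e h h0 : pal_radius X c e h ->
  (forall d, d <= h0 -> X (c - d) = X (c + e + d)) ->
  (h0 < h -> X (c - h0.+1) <> X (c + e + h0.+1)) -> h = h0.
Proof.
move=> [agree mismatch] agree0 mismatch0; case: (ltngtP h h0) => [lt_h|lt_h0|//].
- by case: mismatch; exact: agree0.
- by case: (mismatch0 lt_h0); exact: agree.
Qed.

Section AlphaImage.
Variables (p p' : nat) (Y X : nat -> bool).
Hypothesis X_alpha : is_alpha_image p p' Y X.

Definition arun (l : bool) : nat := if l then p' else p.
Local Notation s := (spos p p' Y).

Lemma geq_min_arun l : minn p p' <= arun l.
Proof. by case: l; rewrite ?geq_minl ?geq_minr. Qed.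

Lemma leq_arun_max l : arun l <= maxn p p'.
Proof. by case: l; rewrite ?leq_maxl ?leq_maxr. Qed.

Lemma size_alpha l : size (alpha p p' l) = (arun l).+1.
Proof. by case: l; rewrite /alpha size_rcons size_nseq. Qed.

Lemma spos0 : s 0 = 0.
Proof. by rewrite /spos big_ord0. Qed.

Lemma sposS j : s j.+1 = s j + (arun (Y j)).+1.
Proof. by rewrite /spos big_ord_recr /= size_alpha. Qed.

Lemma spos_gt0 j : 0 < j -> 0 < s j.
Proof. by case: j => // j _; rewrite sposS addnS. Qed.

Lemma spos_gt0_inv j : 0 < s j -> 0 < j.
Proof. by case: j => [|//]; rewrite spos0. Qed.

Lemma leq_spos : {homo s : j k / j <= k}.
Proof. by apply: homo_leq => [//|???|j]; [exact: leq_trans | rewrite sposS leq_addr]. Qed.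

Lemma alpha_image_a j t : t < arun (Y j) -> X (s j + t) = a.
Proof.
move=> lt_t; rewrite X_alpha ?size_alpha ?ltnS 1?ltnW //.
by rewrite /alpha; case: (Y j) lt_t => lt_t; rewrite nth_rcons size_nseq lt_t nth_nseq lt_t.
Qed.

Lemma alpha_image_b j : X (s j + arun (Y j)) = b.
Proof.
rewrite X_alpha ?size_alpha //.
by rewrite /alpha; case: (Y j); rewrite nth_rcons size_nseq ltnn eqxx.
Qed.

Lemma alpha_image_pred j : 0 < j -> X (s j).-1 = b.
Proof. by case: j => // j _; rewrite sposS addnS alpha_image_b. Qed.

Lemma spos_decomp x : exists j t, t <= arun (Y j) /\ x = s j + t.
Proof.
elim: x => [|x [j [t [le_t ->]]]]; first by exists 0, 0; rewrite spos0.
case: (ltnP t (arun (Y j))) => [lt_t | ge_t]; first by exists j, t.+1; rewrite addnS.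
by exists j.+1, 0; rewrite sposS; split=> //; lia.
Qed.

Lemma spos_decomp_uniq j j' t t' :
  t <= arun (Y j) -> t' <= arun (Y j') -> s j + t = s j' + t' -> j = j' /\ t = t'.
Proof.
have lt_spos k k' u : k < k' -> u <= arun (Y k) -> s k + u < s k'.
  by move=> lt_k le_u; apply: leq_trans (leq_spos lt_k); rewrite sposS; lia.
move=> le_t le_t' eq_s; case: (ltngtP j j') => [lt_j|lt_j|eq_j].
- by have := lt_spos _ _ _ lt_j le_t; lia.
- by have := lt_spos _ _ _ lt_j le_t'; lia.
- by subst j'; split=> //; lia.
Qed.

Lemma mid_spos_a j r : 0 < r <= arun (Y j) -> X (mid (s j) r).1 = a.
Proof.
case/andP=> r_gt0 le_r; have [h [e [le_e def_r]]] := mid_cases r_gt0.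
by rewrite def_r midE //= alpha_image_a //; lia.
Qed.

Lemma mid_spos_inj j j' r r' : 0 < r <= arun (Y j) -> 0 < r' <= arun (Y j') ->
  mid (s j) r = mid (s j') r' -> j = j' /\ r = r'.
Proof.
case/andP=> r_gt0 le_r /andP[r'_gt0 le_r'].
have [h [e [le_e def_r]]] := mid_cases r_gt0.
have [h' [e' [le_e' def_r']]] := mid_cases r'_gt0.
rewrite def_r def_r' !midE // => -[eq_c eq_e].
by have [||-> ->] := spos_decomp_uniq _ _ eq_c; lia.
Qed.

Lemma is_reflectionP c : is_reflection p p' Y c <->
  exists j, c = mid (s j) (arun (Y j)) \/ [/\ Y j = a, Y j.+1 = a & c = (s j + arun (Y j), 1)].
Proof.
split=> -[j refl]; exists j; move: refl; rewrite /arun.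
- by case=> [[-> ->]|[[-> ->]|[-> [? ->]]]]; [left | left | right].
- by case: (Y j) => [[-> | [/eqP]] | [-> | [? ? ->]]] //; [right; left | left | right; right].
Qed.

Lemma occurs_at_aba j n : n <= arun (Y j) -> n <= arun (Y j.+1) ->
  occurs_at X (aba n) (s j + arun (Y j) - n).
Proof.
move=> le_n le_n' u; rewrite size_aba nth_aba => lt_u; case: ltngtP => [lt_un|lt_nu|->].
- have -> : s j + arun (Y j) - n + u = s j + (arun (Y j) - n + u) by lia.
  by rewrite alpha_image_a //; lia.
- have -> : s j + arun (Y j) - n + u = s j.+1 + (u - n.+1) by rewrite sposS; lia.
  by rewrite alpha_image_a //; lia.
- by rewrite subnK ?alpha_image_b // (leq_trans le_n) ?leq_addl.
Qed.

End AlphaImage.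

Section OriginalCenters.
Variables (p p' : nat) (Y X : nat -> bool).
Hypothesis X_alpha : is_alpha_image p p' Y X.
Local Notation s := (spos p p' Y).
Local Notation arun := (arun p p').

(* The center sits after t and before R letters of a run of length t + e + R + 1;
   t = R is excluded because then the palindrome extends beyond the run. *)
Lemma run_center_radius j t e R h : t + e + R + 1 = arun (Y j) -> t <> R ->
  pal_radius X (s j + t) e h -> h < s j + t -> h = minn t R.
Proof.
move=> def_run neq_tR rad lt_h; apply: (pal_radius_unique rad) => [d le_d | lt_h0].
  have -> : s j + t - d = s j + (t - d) by lia.
  by rewrite -!addnA !(alpha_image_a X_alpha); lia.
case: (leqP t R) => [le_tR | lt_Rt].
- have j_gt0 : 0 < j by apply: (@spos_gt0_inv p p' Y); lia.
  have -> : s j + t - t.+1 = (s j).-1 by lia.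
  have -> : s j + t + e + t.+1 = s j + (2 * t + e + 1) by lia.
  by rewrite (alpha_image_pred X_alpha) // (alpha_image_a X_alpha); last lia.
- have -> : s j + t - R.+1 = s j + (t - R.+1) by lia.
  have -> : s j + t + e + R.+1 = s j + arun (Y j) by lia.
  by rewrite (alpha_image_b X_alpha) (alpha_image_a X_alpha); last lia.
Qed.

Lemma b_center_radius j h : p != p' -> Y j != Y j.+1 ->
  pal_radius X (s j + arun (Y j)) 0 h -> h < s j + arun (Y j) -> h = minn p p'.
Proof.
move=> neq_pp' neq_Y rad lt_h.
have [min_run neq_run] : minn (arun (Y j)) (arun (Y j.+1)) = minn p p' /\
    arun (Y j) != arun (Y j.+1).
  move: neq_Y; rewrite /arun.
  by case: (Y j); case: (Y j.+1) => // _; rewrite ?(minnC p') ?(eq_sym p').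
have s_succ := sposS p p' Y j.
rewrite -min_run; apply: (pal_radius_unique rad) => [[|d] le_d | lt_h0].
- by rewrite !addn0 subn0.
- have -> : s j + arun (Y j) - d.+1 = s j + (arun (Y j) - d.+1) by lia.
  have -> : s j + arun (Y j) + 0 + d.+1 = s j.+1 + d by lia.
  by rewrite !(alpha_image_a X_alpha); lia.
case: (ltngtP (arun (Y j)) (arun (Y j.+1))) => [lt_run | lt_run | eq_run]; last first.
- by rewrite eq_run eqxx in neq_run.
- have -> : s j + arun (Y j) - (arun (Y j.+1)).+1 = s j + (arun (Y j) - (arun (Y j.+1)).+1) by lia.
  have -> : s j + arun (Y j) + 0 + (arun (Y j.+1)).+1 = s j.+1 + arun (Y j.+1) by lia.
  by rewrite (alpha_image_b X_alpha) (alpha_image_a X_alpha); last lia.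
- have j_gt0 : 0 < j by apply: (@spos_gt0_inv p p' Y); lia.
  have -> : s j + arun (Y j) - (arun (Y j)).+1 = (s j).-1 by lia.
  have -> : s j + arun (Y j) + 0 + (arun (Y j)).+1 = s j.+1 + arun (Y j) by lia.
  by rewrite (alpha_image_pred X_alpha) // (alpha_image_a X_alpha).
Qed.

Lemma original_center_in_run P i h e j t :
  palindrome P -> maximal_occ X P i -> size P = 2 * h + e + 1 -> e <= 1 ->
  i + h = s j + t -> t < arun (Y j) -> original p p' Y X (s j + t, e.+1) ->
  a_run_palindrome (maxn p p') P.
Proof.
move=> palP maxP szP le_e def_c lt_t [center not_refl].
have rad := maximal_occ_pal_radius palP maxP szP; rewrite def_c in rad.
have [i_gt0 [occP _]] := maxP.
have lt_te : t + e < arun (Y j).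
  move: center => /= [[->]|[[->] [_ Xc1]]]; first by rewrite addn0.
  rewrite addn1 ltn_neqAle lt_t andbT.
  by apply: contraPneq Xc1 => def_t; rewrite -addnS def_t (alpha_image_b X_alpha).
have neq_tR : t <> arun (Y j) - t - e - 1.
  move=> def_t; apply: not_refl; apply/is_reflectionP; exists j; left.
  by rewrite (_ : arun (Y j) = 2 * t + e + 1) ?midE //; lia.
have def_h : h = minn t (arun (Y j) - t - e - 1).
  by apply: (run_center_radius _ neq_tR rad); lia.
have le_max := leq_arun_max p p' (Y j); exists (size P); first by lia.
apply: (occurs_at_inj occP); last by rewrite size_nseq.
apply: occurs_at_nseq => u lt_u.
have -> : i + u = s j + (t - h + u) by lia.
by rewrite (alpha_image_a X_alpha); lia.
Qed.

Lemma original_center_on_b P i h e j : p != p' -> (forall k, ~ (Y k = b /\ Y k.+1 = b)) ->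
  palindrome P -> maximal_occ X P i -> size P = 2 * h + e + 1 ->
  i + h = s j + arun (Y j) -> original p p' Y X (s j + arun (Y j), e.+1) ->
  P = aba (minn p p').
Proof.
move=> neq_pp' no_bb palP maxP szP def_c [center not_refl].
have rad := maximal_occ_pal_radius palP maxP szP; rewrite def_c in rad.
have [i_gt0 [occP _]] := maxP.
have e0 : e = 0.
  by case: center => [[]//|[_ []]]; rewrite /= (alpha_image_b X_alpha).
have neq_Y : Y j != Y j.+1.
  apply/eqP => eq_Y; case Yj: (Y j) eq_Y => eq_Y; first by apply: (no_bb j); rewrite Yj -eq_Y.
  by apply: not_refl; apply/is_reflectionP; exists j; right; rewrite e0 -eq_Y.
subst e; have def_h := b_center_radius neq_pp' neq_Y rad.
apply: occurs_at_inj occP _ _; last by rewrite size_aba szP; lia.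
have := occurs_at_aba X_alpha (geq_min_arun p p' (Y j)) (geq_min_arun p p' (Y j.+1)).
by rewrite (_ : s j + _ - _ = i) //; lia.
Qed.

Lemma original_maximal_palindrome P i c : p != p' ->
  (forall k, ~ (Y k = b /\ Y k.+1 = b)) ->
  palindrome P -> maximal_occ X P i -> occ_center i (size P) = Some c ->
  original p p' Y X c -> a_run_palindrome (maxn p p') P \/ P = aba (minn p p').
Proof.
move=> neq_pp' no_bb palP maxP; rewrite /occ_center.
case: eqP => // /eqP; rewrite -lt0n => szP_gt0 [<-].
have [h [e [le_e szP]]] := mid_cases szP_gt0; rewrite szP midE //.
have [j [t [le_t def_c]]] := spos_decomp p p' Y (i + h); rewrite def_c.
case: (ltnP t (arun (Y j))) => [lt_t | ge_t] orig.
  by left; exact: (original_center_in_run palP maxP szP le_e def_c lt_t).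
have def_t : t = arun (Y j) by apply/eqP; rewrite eqn_leq le_t.
right; rewrite def_t in def_c orig.
exact: (original_center_on_b neq_pp' no_bb palP maxP szP def_c).
Qed.

End OriginalCenters.

Lemma exists_letter_after (Y : nat -> bool) : ~ eventually_periodic Y ->
  forall N l, exists2 j, N <= j & Y j = l.
Proof.
move=> aper N l; apply: NNPP => no_l; apply: aper; exists 1, N; split=> // i le_Ni.
have Y_neq k : N <= k -> Y k = ~~ l.
  move=> le_Nk; case: (Y k =P l) => [Ykl | /eqP]; first by case: no_l; exists k.
  by case: (Y k); case: (l).
by rewrite !Y_neq // (leq_trans le_Ni) ?leq_addr.
Qed.

Lemma maximal_original_of_mid p p' (Y X : nat -> bool) P i :
  palindrome P -> maximal_occ X P i -> 0 < size P ->
  original p p' Y X (mid i (size P)) -> MX X P /\ OX p p' Y X P.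
Proof.
move=> palP maxP szP_gt0 orig; have MXP : MX X P by split=> //; exists i.
split=> //; split=> //; exists i, (mid i (size P)); split=> //.
by rewrite /occ_center ifN // -lt0n.
Qed.

Section MaximalOriginalPalindromes.
Variables (p p' : nat) (Y X : nat -> bool).
Hypothesis X_alpha : is_alpha_image p p' Y X.
Hypotheses (p_gt0 : 0 < p) (p'_gt0 : 0 < p').
Hypothesis Y_aper : ~ eventually_periodic Y.
Local Notation s := (spos p p' Y).
Local Notation arun := (arun p p').

Lemma arun_gt0 l : 0 < arun l.
Proof. by case: l. Qed.

Lemma a_run_maximal_original r : 0 < r < maxn p p' ->
  MX X (nseq r a) /\ OX p p' Y X (nseq r a).
Proof.
case/andP=> r_gt0 lt_r; have [j j_gt0 Yj] := exists_letter_after Y_aper 1 (p < p').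
have run_j : arun (Y j) = maxn p p' by rewrite Yj.
have Xa u : u < r -> X (s j + u) = a by move=> lt_u; rewrite (alpha_image_a X_alpha); lia.
apply: (@maximal_original_of_mid _ _ _ _ _ (s j)); rewrite ?size_nseq //.
- by rewrite /palindrome rev_nseq.
- split; first exact: spos_gt0.
  split; first exact: occurs_at_nseq.
  by rewrite size_nseq (alpha_image_pred X_alpha) // (alpha_image_a X_alpha) ?run_j.
have le_run : 0 < r <= arun (Y j) by rewrite r_gt0 run_j ltnW.
have [h [e [le_e def_r]]] := mid_cases r_gt0; split.
  rewrite def_r midE //; case: e le_e def_r => [|[|//]] _ def_r; first by left.
  by right; split=> //; rewrite /= -addnS !Xa; lia.
case/is_reflectionP=> j' [refl | [_ _ refl]].
- have [|<- def_r'] := mid_spos_inj le_run _ refl; first by rewrite arun_gt0 leqnn.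
  lia.
- by have := mid_spos_a X_alpha le_run; rewrite refl (alpha_image_b X_alpha).
Qed.

Lemma aba_maximal_original : (p = p'.+1 \/ p' = p.+1) ->
  (forall k, ~ (Y k = b /\ Y k.+1 = b)) ->
  MX X (aba (minn p p')) /\ OX p p' Y X (aba (minn p p')).
Proof.
move=> adj no_bb; have [j j_gt0 Yj] := exists_letter_after Y_aper 1 b.
have Yj1 : Y j.+1 = a by case Yj1: (Y j.+1) => //; case: (no_bb j).
have s_succ := sposS p p' Y j; rewrite Yj /= in s_succ.
have occ := occurs_at_aba X_alpha (geq_min_arun p p' (Y j)) (geq_min_arun p p' (Y j.+1)).
rewrite Yj /= in occ.
apply: (@maximal_original_of_mid _ _ _ _ _ (s j + p' - minn p p') (aba_palindrome _)).
- split; first by have := spos_gt0 p p' Y j_gt0; lia.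
  split=> //; rewrite size_aba; case: adj => adj.
  + have -> : s j + p' - minn p p' = s j by lia.
    have -> : s j + (2 * minn p p' + 1) = s j.+1 + p' by lia.
    by rewrite (alpha_image_pred X_alpha) // (alpha_image_a X_alpha) // Yj1 /=; lia.
  + have -> : (s j + p' - minn p p').-1 = s j + 0 by lia.
    have -> : s j + p' - minn p p' + (2 * minn p p' + 1) = s j.+1 + arun (Y j.+1).
      by rewrite Yj1 /=; lia.
    by rewrite (alpha_image_b X_alpha) (alpha_image_a X_alpha) ?Yj.
- by rewrite size_aba addn1.
rewrite size_aba; have -> : mid (s j + p' - minn p p') (2 * minn p p' + 1) = (s j + arun (Y j), 1).
  by rewrite -(addn0 (2 * _)) midE // Yj /=; congr (_, _); lia.
split; first by left.
case/is_reflectionP=> j' [refl | [Yj' _ [refl]]].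
- have le_run : 0 < arun (Y j') <= arun (Y j') by rewrite arun_gt0 leqnn.
  by have := mid_spos_a X_alpha le_run; rewrite -refl /= (alpha_image_b X_alpha).
- have [eq_j _] := spos_decomp_uniq (leqnn _) (leqnn _) refl.
  by rewrite -eq_j Yj in Yj'.
Qed.

End MaximalOriginalPalindromes.

Lemma aba_not_a_run M n : ~ a_run_palindrome M (aba n).
Proof. by case=> r _ /(congr1 (nth a ^~ n)); rewrite nth_aba eqxx nth_nseq if_same. Qed.

Lemma maximal_originalP p p' (Y X : nat -> bool) :
  0 < p -> 0 < p' -> (p = p'.+1 \/ p' = p.+1) -> ~ eventually_periodic Y ->
  (forall j, ~ (Y j = b /\ Y j.+1 = b)) -> is_alpha_image p p' Y X ->
  forall P, MX X P /\ OX p p' Y X P <->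
            a_run_palindrome (maxn p p') P \/ P = aba (minn p p').
Proof.
move=> p_gt0 p'_gt0 adj aper no_bb X_alpha P; split.
- move=> [[palP _] [_ [i [c [maxP [center orig]]]]]].
  have neq_pp' : p != p' by lia.
  exact: (original_maximal_palindrome X_alpha neq_pp' no_bb palP maxP center orig).
- case=> [[r lt_r ->] | ->]; first exact: a_run_maximal_original.
  exact: aba_maximal_original.
Qed.

Theorem lemma5 (p p' : nat) (Y X : nat -> bool) :
  0 < p -> 0 < p' -> (p = p'.+1 \/ p' = p.+1) ->
  sturmian Y -> (forall j, ~ (Y j = b /\ Y j.+1 = b)) ->
  is_alpha_image p p' Y X ->
  [/\ has_card (fun P => MXc X [:: b] P /\ OX p p' Y X P) 1,
      (forall k, (k = p - 1 \/ k = p' - 1) -> odd k ->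
         has_card (fun P => MXc X [:: a] P /\ OX p p' Y X P) (k.+1 %/ 2)),
      (forall k, (k = p - 1 \/ k = p' - 1) -> ~~ odd k ->
         has_card (fun P => MXc X [:: a; a] P /\ OX p p' Y X P) (k %/ 2)) &
      has_card (fun P => MX X P /\ OX p p' Y X P) (maxn p p')].
Proof.
move=> p_gt0 p'_gt0 adj [aper _] no_bb X_alpha.
have charP := maximal_originalP p_gt0 p'_gt0 adj aper no_bb X_alpha.
have centerP c P : MXc X c P /\ OX p p' Y X P <->
    a_run_palindrome (maxn p p') P /\ word_center P = c \/ P = aba (minn p p') /\ word_center P = c.
  by have := charP P; rewrite /MXc; tauto.
split.
- apply: (has_card1 (w := aba (minn p p'))) => P; rewrite centerP.
  split=> [[[[r _ ->] wc]|[-> _]]|->] //; last by right; rewrite word_center_aba.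
  by move: wc; rewrite word_center_nseq; case: odd; case: (r == 0).
- move=> k def_k odd_k; have -> : k.+1 %/ 2 = (maxn p p')./2.
    by have := odd_double_half k; rewrite odd_k -mul2n -!divn2; lia.
  apply: (has_card_ext (has_card_odd_a_run_palindrome _)) => P; rewrite centerP.
  by split=> [|[//|[-> ]]]; [left | rewrite word_center_aba].
- move=> k def_k even_k; have -> : k %/ 2 = (maxn p p').-1./2.
    by have := odd_double_half k; rewrite (negbTE even_k) -mul2n -!divn2; lia.
  apply: (has_card_ext (has_card_even_a_run_palindrome _)) => P; rewrite centerP.
  by split=> [|[//|[-> ]]]; [left | rewrite word_center_aba].
- rewrite -[maxn p p']prednK; last by lia.
  apply: (has_card_ext (has_card_addr (has_card_a_run_palindrome _) (@aba_not_a_run _ _))).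
  by move=> P; apply: iff_sym.
Qed.
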